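(* For each $X\subseteq\omega$, the equivalence relation $E^X_=$ on $\omega$ defined by $i\,E^X_=\,j\iff W_i^X=W_j^X$ is complete among all $\Pi^X_2$ equivalence relations on $\omega$ with respect to finitary reducibility; that is, for every equivalence relation $R$ on $\omega$ which is $\Pi^0_2$ relative to $X$, there is a (computable, not merely $X$-computable) finitary reduction from $R$ to $E^X_=$.
   Context: $W_e^X$ denotes the domain of the $e$-th oracle Turing machine with oracle $X$. For equivalence relations $E,F$ on $\omega$, a finitary reduction from $E$ to $F$ is a single total computable function which, given $n\ge1$ and an $n$-tuple $(x_0,\dots,x_{n-1})\in\omega^n$, outputs an $n$-tuple $(y_0,\dots,y_{n-1})\in\omega^n$ such that for all $i<j<n$, $x_i\,E\,x_j\iff y_i\,F\,y_j$; its existence is written $E\leq_c^{<\omega}F$. *)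

From Stdlib Require Import Arith List Cantor.
Import ListNotations.

Definition pair (x y : nat) : nat := Cantor.to_nat (x, y).
Definition unpair (n : nat) : nat * nat := Cantor.of_nat n.

Inductive code : Type :=
| cZero
| cSucc
| cId
| cFst
| cSnd
| cOracle
| cComp (f g : code)
| cPair (f g : code)
| cRec (f g : code)          (* <a,0> |-> f a ; <a,n+1> |-> g <a,<n,h(a,n)>> *)
| cMu (f : code).            (* x |-> least i with f <x,i> = 0 (all earlier defined) *)

Fixpoint eval (X : nat -> bool) (k : nat) (c : code) (x : nat) {struct k}
  : option nat :=
  match k with
  | 0 => None
  | S k =>
    match c with
    | cZero => Some 0
    | cSucc => Some (S x)
    | cId => Some x
    | cFst => Some (fst (unpair x))
    | cSnd => Some (snd (unpair x))
    | cOracle => Some (if X x then 1 else 0)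
    | cComp f g =>
        match eval X k g x with Some y => eval X k f y | None => None end
    | cPair f g =>
        match eval X k f x, eval X k g x with
        | Some a, Some b => Some (pair a b)
        | _, _ => None
        end
    | cRec f g =>
        let a := fst (unpair x) in
        (fix r (n : nat) : option nat :=
           match n with
           | 0 => eval X k f a
           | S m => match r m with
                    | Some h => eval X k g (pair a (pair m h))
                    | None => None
                    end
           end) (snd (unpair x))
    | cMu f =>
        (fix s (t i : nat) : option nat :=
           match t with
           | 0 => None
           | S t => match eval X k f (pair x i) with
                    | Some 0 => Some i
                    | Some _ => s t (S i)
                    | None => None
                    end
           end) k 0
    end
  end.

Definition computes (X : nat -> bool) (c : code) (x y : nat) : Prop :=
  exists k, eval X k c x = Some y.

Definition halts (X : nat -> bool) (c : code) (x : nat) : Prop :=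
  exists y, computes X c x y.

(* Goedel numbering: index e = <tag, rest>. Every program has an index. *)
Fixpoint decode_aux (k e : nat) : code :=
  match k with
  | 0 => cZero
  | S k =>
    let t := fst (unpair e) in
    let r := snd (unpair e) in
    let a := fst (unpair r) in
    let b := snd (unpair r) in
    match t with
    | 0 => cZero
    | 1 => cSucc
    | 2 => cId
    | 3 => cFst
    | 4 => cSnd
    | 5 => cOracle
    | 6 => cComp (decode_aux k a) (decode_aux k b)
    | 7 => cPair (decode_aux k a) (decode_aux k b)
    | 8 => cRec (decode_aux k a) (decode_aux k b)
    | _ => cMu (decode_aux k r)
    end
  end.

Definition decode (e : nat) : code := decode_aux e e.

Definition phi (X : nat -> bool) (e x y : nat) : Prop := computes X (decode e) x y.

Definition W (X : nat -> bool) (e n : nat) : Prop := halts X (decode e) n.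

Definition EW (X : nat -> bool) (i j : nat) : Prop := forall n, W X i n <-> W X j n.

(* The empty oracle: "computable" means computable with this oracle. *)
Definition no_oracle : nat -> bool := fun _ => false.

Definition is_equiv (R : nat -> nat -> Prop) : Prop :=
  (forall x, R x x) /\ (forall x y, R x y -> R y x) /\
  (forall x y z, R x y -> R y z -> R x z).

(* R is Pi^0_2 relative to X: R i j <-> forall a, exists b, T(i,j,a,b),
   with T decided by a total X-computable function (0 = true). *)
Definition Pi02_rel (X : nat -> bool) (R : nat -> nat -> Prop) : Prop :=
  exists e,
    (forall z, exists y, phi X e z y) /\
    (forall i j, R i j <-> forall a, exists b, phi X e (pair (pair i j) (pair a b)) 0).

Fixpoint lcode (xs : list nat) : nat :=
  match xs with
  | [] => 0
  | x :: s => S (pair x (lcode s))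
  end.

Definition finitary_reduction (E F : nat -> nat -> Prop)
    (f : list nat -> list nat) : Prop :=
  (exists e, forall xs, phi no_oracle e (lcode xs) (lcode (f xs))) /\
  (forall xs, 1 <= length xs ->
     length (f xs) = length xs /\
     forall i j, i < j < length xs ->
       (E (nth i xs 0) (nth j xs 0) <-> F (nth i (f xs) 0) (nth j (f xs) 0))).

Definition finitary_reducible (E F : nat -> nat -> Prop) : Prop :=
  exists f, finitary_reduction E F f.

(* At stage [m], join positions [p -> q] of a tuple [x_0, ..., x_(n-1)] when the Pi^0_2 matrix of
   [R(x_p, x_q)] has witnesses for all [a < m], and send position [k] to an index of the
   X-c.e. set of pairs [<j, m>] such that [j] is reachable from [k] at stage [m].  If
   [R(x_k, x_l)], then [k] and [l] are joined both ways at every stage, so the two sets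
   coincide.  Otherwise, as only finitely many pairs of entries occur, at some stage [M] only
   [R]-related entries are joined; equal sets would make [k] reachable from [l] at stage [M],
   whence [R(x_l, x_k)] by transitivity.  The oracle is queried only when an indexed program
   runs, so the indices themselves are computed from the tuple without it. *)

From Stdlib Require Import Arith List Cantor Lia Classical ClassicalEpsilon Relations.
Import ListNotations.

Definition pfst (z : nat) : nat := fst (unpair z).
Definition psnd (z : nat) : nat := snd (unpair z).

Lemma unpair_pair a b : unpair (pair a b) = (a, b).
Proof. apply cancel_of_to. Qed.

Lemma pfst_pair a b : pfst (pair a b) = a.
Proof. unfold pfst; rewrite unpair_pair; reflexivity. Qed.

Lemma psnd_pair a b : psnd (pair a b) = b.
Proof. unfold psnd; rewrite unpair_pair; reflexivity. Qed.

Lemma pair_pfst_psnd z : pair (pfst z) (psnd z) = z.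
Proof. unfold pfst, psnd, pair, unpair; rewrite <- surjective_pairing; apply cancel_to_of. Qed.

Lemma add_le_pair a b : a + b <= pair a b.
Proof. unfold pair; pose proof (to_nat_non_decreasing a b); lia. Qed.

Global Opaque pair unpair.
Hint Rewrite pfst_pair psnd_pair : pairing.

(** * Fuel monotonicity of the evaluator *)

(* The loops inlined in [eval] for [cMu] and [cRec]. *)
Definition mu_search (ev : nat -> option nat) (x : nat) : nat -> nat -> option nat :=
  fix s (t i : nat) : option nat :=
  match t with
  | 0 => None
  | S t => match ev (pair x i) with
           | Some 0 => Some i
           | Some _ => s t (S i)
           | None => None
           end
  end.

Definition rec_loop (ef eg : nat -> option nat) (a : nat) : nat -> option nat :=
  fix r (n : nat) : option nat :=
  match n with
  | 0 => ef a
  | S m => match r m with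
           | Some h => eg (pair a (pair m h))
           | None => None
           end
  end.

Lemma eval_mu X k f x : eval X (S k) (cMu f) x = mu_search (eval X k f) x k 0.
Proof. reflexivity. Qed.

Lemma eval_rec X k f g x :
  eval X (S k) (cRec f g) x = rec_loop (eval X k f) (eval X k g) (pfst x) (psnd x).
Proof. reflexivity. Qed.

Definition extends (e1 e2 : nat -> option nat) : Prop :=
  forall z y, e1 z = Some y -> e2 z = Some y.

Lemma mu_search_mono e1 e2 x t t' i r : extends e1 e2 -> t <= t' ->
  mu_search e1 x t i = Some r -> mu_search e2 x t' i = Some r.
Proof.
  intros H; revert t' i; induction t as [|t IH]; intros t' i Ht E; [discriminate|].
  destruct t' as [|t']; [lia|]; cbn in E |- *.
  destruct (e1 (pair x i)) as [[|v]|] eqn:E1; try discriminate; rewrite (H _ _ E1).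
  - exact E.
  - apply IH; [lia | exact E].
Qed.

Lemma rec_loop_mono f1 f2 g1 g2 a n r : extends f1 f2 -> extends g1 g2 ->
  rec_loop f1 g1 a n = Some r -> rec_loop f2 g2 a n = Some r.
Proof.
  intros Hf Hg; revert r; induction n as [|n IH]; intros r E; cbn in E |- *; auto.
  destruct (rec_loop f1 g1 a n) eqn:E1; try discriminate.
  rewrite (IH _ eq_refl); auto.
Qed.

Lemma eval_mono X k k' c x y : k <= k' -> eval X k c x = Some y -> eval X k' c x = Some y.
Proof.
  revert k' c x y; induction k as [|k IHk]; intros k' c x y Hk E; [discriminate|].
  destruct k' as [|k']; [lia|].
  assert (IH : forall c, extends (eval X k c) (eval X k' c)).
  { intros c' z w; apply IHk; lia. }
  destruct c; cbn in E |- *; auto.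
  - destruct (eval X k c2 x) eqn:E2; try discriminate.
    rewrite (IH _ _ _ E2); apply IH; auto.
  - destruct (eval X k c1 x) eqn:E1; try discriminate.
    destruct (eval X k c2 x) eqn:E2; try discriminate.
    rewrite (IH _ _ _ E1), (IH _ _ _ E2); auto.
  - exact (rec_loop_mono _ _ _ _ _ _ _ (IH c1) (IH c2) E).
  - eapply mu_search_mono; [exact (IH c) | | exact E]; lia.
Qed.

Lemma computes_functional X c x y y' : computes X c x y -> computes X c x y' -> y = y'.
Proof.
  intros [k1 E1] [k2 E2].
  apply (eval_mono X k1 (k1 + k2)) in E1; [|lia].
  apply (eval_mono X k2 (k1 + k2)) in E2; [|lia].
  congruence.
Qed.

Lemma computes_common_fuel X c1 c2 x1 x2 y1 y2 :
  computes X c1 x1 y1 -> computes X c2 x2 y2 ->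
  exists k, eval X k c1 x1 = Some y1 /\ eval X k c2 x2 = Some y2.
Proof.
  intros [k1 E1] [k2 E2]; exists (k1 + k2).
  split; [eapply eval_mono, E1 | eapply eval_mono, E2]; lia.
Qed.

Definition computes_fun (X : nat -> bool) (c : code) (F : nat -> nat) : Prop :=
  forall x, computes X c x (F x).

Lemma computes_fun_ext X c F G :
  computes_fun X c F -> (forall x, F x = G x) -> computes_fun X c G.
Proof. intros H E x; rewrite <- E; apply H. Qed.

Lemma computes_fun_zero X : computes_fun X cZero (fun _ => 0).
Proof. intro x; exists 1; reflexivity. Qed.
Lemma computes_fun_succ X : computes_fun X cSucc S.
Proof. intro x; exists 1; reflexivity. Qed.
Lemma computes_fun_id X : computes_fun X cId (fun x => x).
Proof. intro x; exists 1; reflexivity. Qed.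
Lemma computes_fun_fst X : computes_fun X cFst pfst.
Proof. intro x; exists 1; reflexivity. Qed.
Lemma computes_fun_snd X : computes_fun X cSnd psnd.
Proof. intro x; exists 1; reflexivity. Qed.

Lemma computes_fun_comp X f g F G : computes_fun X f F -> computes_fun X g G ->
  computes_fun X (cComp f g) (fun x => F (G x)).
Proof.
  intros Hf Hg x; destruct (computes_common_fuel _ _ _ _ _ _ _ (Hg x) (Hf (G x))) as [k [E1 E2]].
  exists (S k); cbn; rewrite E1; exact E2.
Qed.

Lemma computes_fun_pair X f g F G : computes_fun X f F -> computes_fun X g G ->
  computes_fun X (cPair f g) (fun x => pair (F x) (G x)).
Proof.
  intros Hf Hg x; destruct (computes_common_fuel _ _ _ _ _ _ _ (Hf x) (Hg x)) as [k [E1 E2]].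
  exists (S k); cbn; rewrite E1, E2; reflexivity.
Qed.

Fixpoint prim_rec (F G : nat -> nat) (a n : nat) : nat :=
  match n with
  | 0 => F a
  | S m => G (pair a (pair m (prim_rec F G a m)))
  end.

Lemma computes_fun_rec X f g F G : computes_fun X f F -> computes_fun X g G ->
  computes_fun X (cRec f g) (fun x => prim_rec F G (pfst x) (psnd x)).
Proof.
  intros Hf Hg x.
  assert (Hloop : forall n, exists k,
    rec_loop (eval X k f) (eval X k g) (pfst x) n = Some (prim_rec F G (pfst x) n)).
  { induction n as [|n [k1 E1]]; [apply Hf|].
    destruct (Hg (pair (pfst x) (pair n (prim_rec F G (pfst x) n)))) as [k2 E2].
    exists (k1 + k2); cbn.
    assert (Hmono : forall c, extends (eval X k1 c) (eval X (k1 + k2) c))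
      by (intros c z w; apply eval_mono; lia).
    rewrite (rec_loop_mono _ _ _ _ _ _ _ (Hmono f) (Hmono g) E1).
    eapply eval_mono, E2; lia. }
  destruct (Hloop (psnd x)) as [k E]; exists (S k); rewrite eval_rec; exact E.
Qed.

Lemma halts_comp X f g G x : computes_fun X g G ->
  (halts X (cComp f g) x <-> halts X f (G x)).
Proof.
  intro Hg; split.
  - intros [y [[|k] E]]; [discriminate|]; cbn in E.
    destruct (eval X k g x) as [n|] eqn:E1; [|discriminate].
    replace n with (G x) in E by (apply (computes_functional X g x); [apply Hg | exists k; auto]).
    exists y, k; exact E.
  - intros [y Hy]; destruct (computes_common_fuel _ _ _ _ _ _ _ (Hg x) Hy) as [k [E1 E2]].
    exists y, (S k); cbn; rewrite E1; exact E2.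
Qed.

Lemma mu_search_sound e x t i r : mu_search e x t i = Some r -> e (pair x r) = Some 0.
Proof.
  revert i; induction t as [|t IH]; intros i E; cbn in E; [discriminate|].
  destruct (e (pair x i)) as [[|v]|] eqn:E1; try discriminate; eauto.
  inversion E; subst; auto.
Qed.

Lemma mu_search_complete e F x t i i0 :
  (forall j, j <= i0 -> e (pair x j) = Some (F (pair x j))) ->
  i <= i0 -> i0 < i + t -> F (pair x i0) = 0 ->
  exists r, mu_search e x t i = Some r.
Proof.
  intros He; revert i; induction t as [|t IH]; intros i H1 H2 H3; [lia|].
  cbn; rewrite (He i H1).
  destruct (F (pair x i)) eqn:Ei; [eauto|].
  assert (i <> i0) by (intros ->; congruence).
  apply IH; lia.
Qed.

Lemma computes_fun_uniform_fuel X f F x n : computes_fun X f F ->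
  exists k, forall j, j <= n -> eval X k f (pair x j) = Some (F (pair x j)).
Proof.
  intro Hf; induction n as [|n [k1 E1]].
  - destruct (Hf (pair x 0)) as [k E]; exists k; intros j Hj.
    replace j with 0 by lia; exact E.
  - destruct (Hf (pair x (S n))) as [k2 E2]; exists (k1 + k2); intros j Hj.
    destruct (Nat.eq_dec j (S n)) as [->|].
    + eapply eval_mono, E2; lia.
    + eapply eval_mono, E1; lia.
Qed.

Lemma halts_mu X f F x : computes_fun X f F ->
  (halts X (cMu f) x <-> exists i, F (pair x i) = 0).
Proof.
  intro Hf; split.
  - intros [y [[|k] E]]; [discriminate|]; rewrite eval_mu in E.
    apply mu_search_sound in E; exists y.
    apply (computes_functional X f (pair x y)); [apply Hf | exists k; auto].
  - intros [i0 Hi0]; destruct (computes_fun_uniform_fuel X f F x i0 Hf) as [k Hk].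
    destruct (mu_search_complete (eval X (k + S i0) f) F x (k + S i0) 0 i0) as [r Er];
      auto; try lia.
    { intros j Hj; eapply eval_mono, Hk; auto; lia. }
    exists r, (S (k + S i0)); rewrite eval_mu; exact Er.
Qed.

(** * A small library of total programs *)

Fixpoint cConst (n : nat) : code :=
  match n with 0 => cZero | S n => cComp cSucc (cConst n) end.

Lemma computes_fun_const X n : computes_fun X (cConst n) (fun _ => n).
Proof.
  induction n as [|n IH]; [apply computes_fun_zero|].
  exact (computes_fun_comp X _ _ _ _ (computes_fun_succ X) IH).
Qed.

Definition cIter (body : code) : code := cRec cId (cComp body (cComp cSnd cSnd)).

Lemma computes_fun_iter X body B : computes_fun X body B ->
  computes_fun X (cIter body) (fun x => Nat.iter (psnd x) B (pfst x)).
Proof.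
  intro H; eapply computes_fun_ext.
  - apply computes_fun_rec; [apply computes_fun_id|].
    apply computes_fun_comp; [exact H|].
    apply computes_fun_comp; apply computes_fun_snd.
  - intro x; cbv beta; generalize (psnd x) as n; induction n as [|n IH]; cbn; [reflexivity|].
    autorewrite with pairing; rewrite IH; reflexivity.
Qed.

Definition cLoop (body start count : code) : code := cComp (cIter body) (cPair start count).

Lemma computes_fun_loop X body start count B S N :
  computes_fun X body B -> computes_fun X start S -> computes_fun X count N ->
  computes_fun X (cLoop body start count) (fun x => Nat.iter (N x) B (S x)).
Proof.
  intros HB HS HN; eapply computes_fun_ext.
  - apply computes_fun_comp; [apply computes_fun_iter, HB | apply computes_fun_pair; eauto].
  - intro x; cbn; autorewrite with pairing; reflexivity.
Qed.

Definition cPred : code := cComp (cRec cZero (cComp cFst cSnd)) (cPair cZero cId).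

Lemma computes_fun_pred X : computes_fun X cPred pred.
Proof.
  eapply computes_fun_ext.
  - apply computes_fun_comp; [apply computes_fun_rec|apply computes_fun_pair].
    + apply computes_fun_zero.
    + apply computes_fun_comp; [apply computes_fun_fst | apply computes_fun_snd].
    + apply computes_fun_zero.
    + apply computes_fun_id.
  - intro x; cbn; autorewrite with pairing; destruct x; cbn; autorewrite with pairing; reflexivity.
Qed.

(* Tests return 0 for true. *)
Definition cIfz (c t e : code) : code := cComp (cRec t (cComp e cFst)) (cPair cId c).

Lemma computes_fun_ifz X c t e C T E :
  computes_fun X c C -> computes_fun X t T -> computes_fun X e E ->
  computes_fun X (cIfz c t e) (fun x => match C x with 0 => T x | S _ => E x end).
Proof.
  intros HC HT HE; eapply computes_fun_ext.
  - apply computes_fun_comp; [apply computes_fun_rec|apply computes_fun_pair].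
    + exact HT.
    + apply computes_fun_comp; [exact HE | apply computes_fun_fst].
    + apply computes_fun_id.
    + exact HC.
  - intro x; cbn; autorewrite with pairing; destruct (C x); cbn; autorewrite with pairing;
      reflexivity.
Qed.

Definition cSub (a b : code) : code := cLoop cPred a b.

Lemma computes_fun_sub X a b A B : computes_fun X a A -> computes_fun X b B ->
  computes_fun X (cSub a b) (fun x => A x - B x).
Proof.
  intros HA HB; eapply computes_fun_ext.
  - apply computes_fun_loop; [apply computes_fun_pred | exact HA | exact HB].
  - intro x; cbv beta; generalize (A x) (B x); intros u n.
    induction n as [|n IH]; simpl; [lia | rewrite IH; lia].
Qed.

Definition test_eq (a b : nat) : nat := match a - b with 0 => b - a | S _ => 1 end.
Definition test_and (u v : nat) : nat := match u with 0 => v | S _ => 1 end.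
Definition test_not (u : nat) : nat := match u with 0 => 1 | S _ => 0 end.

Lemma test_eq_spec a b : test_eq a b = 0 <-> a = b.
Proof. unfold test_eq; destruct (a - b) eqn:E; lia. Qed.

Lemma test_and_spec u v : test_and u v = 0 <-> u = 0 /\ v = 0.
Proof. destruct u; cbn; lia. Qed.

Definition cEq (a b : code) : code := cIfz (cSub a b) (cSub b a) (cConst 1).
Definition cAnd (a b : code) : code := cIfz a b (cConst 1).
Definition cNot (a : code) : code := cIfz a (cConst 1) (cConst 0).

Lemma computes_fun_eq X a b A B : computes_fun X a A -> computes_fun X b B ->
  computes_fun X (cEq a b) (fun x => test_eq (A x) (B x)).
Proof.
  intros; eapply computes_fun_ext.
  - apply computes_fun_ifz; [apply computes_fun_sub.. | apply computes_fun_const]; eauto.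
  - reflexivity.
Qed.

Lemma computes_fun_and X a b A B : computes_fun X a A -> computes_fun X b B ->
  computes_fun X (cAnd a b) (fun x => test_and (A x) (B x)).
Proof.
  intros; eapply computes_fun_ext.
  - apply computes_fun_ifz; eauto; apply computes_fun_const.
  - reflexivity.
Qed.

Lemma computes_fun_not X a A : computes_fun X a A ->
  computes_fun X (cNot a) (fun x => test_not (A x)).
Proof.
  intros; eapply computes_fun_ext.
  - apply computes_fun_ifz; eauto; apply computes_fun_const.
  - reflexivity.
Qed.

(* Entries of lists coded by [lcode]; out-of-range positions read as 0. *)
Definition ltail (l : nat) : nat := psnd (pred l).
Definition lnth (i l : nat) : nat := pfst (pred (Nat.iter i ltail l)).

Lemma lnth_lcode xs i : lnth i (lcode xs) = nth i xs 0.
Proof.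
  unfold lnth; revert i; induction xs as [|x xs IH]; intro i.
  - assert (Hnil : forall j, Nat.iter j ltail 0 = 0)
      by (induction j as [|j IHj]; simpl; [|rewrite IHj]; reflexivity).
    rewrite Hnil; destruct i; reflexivity.
  - destruct i as [|i]; simpl; autorewrite with pairing; [reflexivity|].
    rewrite <- Nat.iter_succ, Nat.iter_succ_r; unfold ltail at 2; simpl;
      autorewrite with pairing; apply IH.
Qed.

Lemma lnth_cons_0 k l : lnth 0 (S (pair k l)) = k.
Proof. unfold lnth; cbn; autorewrite with pairing; reflexivity. Qed.

Definition cNth (ci cl : code) : code :=
  cComp (cComp cFst cPred) (cLoop (cComp cSnd cPred) cl ci).

Lemma computes_fun_nth X ci cl I L : computes_fun X ci I -> computes_fun X cl L ->
  computes_fun X (cNth ci cl) (fun x => lnth (I x) (L x)).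
Proof.
  intros; eapply computes_fun_ext.
  - apply computes_fun_comp.
    + apply computes_fun_comp; [apply computes_fun_fst | apply computes_fun_pred].
    + apply computes_fun_loop; eauto.
      apply computes_fun_comp; [apply computes_fun_snd | apply computes_fun_pred].
  - reflexivity.
Qed.

(* Bounded quantification: the state [<x, <a, acc>>] scans [a = 0, 1, ...] and [acc] stays 0
   as long as [T <x, a>] has been 0. *)
Definition forall_step (T : nat -> nat) (s : nat) : nat :=
  pair (pfst s) (pair (S (pfst (psnd s)))
    (match psnd (psnd s) with 0 => T (pair (pfst s) (pfst (psnd s))) | S _ => psnd (psnd s) end)).

Definition bforall (T : nat -> nat) (z : nat) : nat :=
  psnd (psnd (Nat.iter (psnd z) (forall_step T) (pair (pfst z) (pair 0 0)))).

Definition bexists (T : nat -> nat) (z : nat) : nat :=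
  test_not (bforall (fun y => test_not (T y)) z).

Lemma forall_step_iter T x m : exists acc,
  Nat.iter m (forall_step T) (pair x (pair 0 0)) = pair x (pair m acc) /\
  (acc = 0 <-> forall a, a < m -> T (pair x a) = 0).
Proof.
  induction m as [|m [acc [E Hacc]]].
  - exists 0; split; [reflexivity | split; [lia | reflexivity]].
  - simpl; rewrite E; unfold forall_step; autorewrite with pairing.
    destruct acc as [|acc]; eexists; (split; [reflexivity|]).
    + split.
      * intros H0 a Ha; destruct (Nat.eq_dec a m) as [->|]; auto; apply Hacc; auto; lia.
      * intros H0; apply H0; lia.
    + split; [discriminate|].
      intros H0; enough (S acc = 0) by lia; apply Hacc; auto.
Qed.

Lemma bforall_spec T x m : bforall T (pair x m) = 0 <-> forall a, a < m -> T (pair x a) = 0.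
Proof.
  unfold bforall; autorewrite with pairing.
  destruct (forall_step_iter T x m) as [acc [-> H]]; autorewrite with pairing; exact H.
Qed.

Lemma bexists_spec T x m : bexists T (pair x m) = 0 <-> exists a, a < m /\ T (pair x a) = 0.
Proof.
  unfold bexists; pose proof (bforall_spec (fun y => test_not (T y)) x m) as H.
  destruct (bforall (fun y => test_not (T y)) (pair x m)) as [|n]; cbn.
  - split; [discriminate|]; intros [a [Ha Ta]].
    specialize (proj1 H eq_refl a Ha); rewrite Ta; discriminate.
  - split; [intros _ | reflexivity].
    apply NNPP; intro Hn; enough (S n = 0) by discriminate.
    apply H; intros a Ha; destruct (T (pair x a)) eqn:Ta; [exfalso; eauto | reflexivity].
Qed.

Definition cForall (t : code) : code :=
  cComp (cComp cSnd cSnd)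
    (cLoop (cPair cFst (cPair (cComp cSucc (cComp cFst cSnd))
              (cIfz (cComp cSnd cSnd) (cComp t (cPair cFst (cComp cFst cSnd)))
                    (cComp cSnd cSnd))))
           (cPair cFst (cPair cZero cZero)) cSnd).

Definition cExists (t : code) : code := cNot (cForall (cNot t)).

Lemma computes_fun_forall X t T : computes_fun X t T -> computes_fun X (cForall t) (bforall T).
Proof.
  intro; eapply computes_fun_ext;
  [ repeat first
      [ eassumption | apply computes_fun_ifz | apply computes_fun_loop | apply computes_fun_pair
      | apply computes_fun_fst | apply computes_fun_snd | apply computes_fun_succ
      | apply computes_fun_zero | apply computes_fun_comp ]
  | intro; reflexivity ].
Qed.

Lemma computes_fun_exists X t T : computes_fun X t T -> computes_fun X (cExists t) (bexists T).
Proof. intro; apply computes_fun_not, computes_fun_forall, computes_fun_not; assumption. Qed.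

Ltac prove_computes_fun :=
  eapply computes_fun_ext;
  [ repeat first
      [ eassumption
      | apply computes_fun_forall | apply computes_fun_exists
      | apply computes_fun_eq | apply computes_fun_and | apply computes_fun_not
      | apply computes_fun_nth | apply computes_fun_ifz | apply computes_fun_loop
      | apply computes_fun_const | apply computes_fun_pred
      | apply computes_fun_pair | apply computes_fun_fst | apply computes_fun_snd
      | apply computes_fun_succ | apply computes_fun_id | apply computes_fun_zero
      | apply computes_fun_comp ]
  | intro; reflexivity ].

(** * Goedel numbers *)

Fixpoint enc (c : code) : nat :=
  match c with
  | cZero => pair 0 0
  | cSucc => pair 1 0
  | cId => pair 2 0
  | cFst => pair 3 0
  | cSnd => pair 4 0
  | cOracle => pair 5 0
  | cComp f g => pair 6 (pair (enc f) (enc g))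
  | cPair f g => pair 7 (pair (enc f) (enc g))
  | cRec f g => pair 8 (pair (enc f) (enc g))
  | cMu f => pair 9 (enc f)
  end.

Lemma decode_aux_enc c k : enc c <= k -> decode_aux k (enc c) = c.
Proof.
  revert k; induction c; intros k Hk; cbn [enc] in Hk;
    match type of Hk with pair ?t ?r <= _ => pose proof (add_le_pair t r) end;
    try match type of Hk with
        | pair _ (pair ?a ?b) <= _ => pose proof (add_le_pair a b)
        end;
    (destruct k as [|k]; [try reflexivity; lia|]);
    cbn; rewrite ?unpair_pair; cbn; rewrite ?unpair_pair; try reflexivity;
    f_equal; cbn; first [apply IHc1 | apply IHc2 | apply IHc]; lia.
Qed.

Lemma decode_enc c : decode (enc c) = c.
Proof. apply decode_aux_enc; lia. Qed.

(** * The reachability program *)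

Section ReachProgram.
Variables (X : nat -> bool) (t : code) (T : nat -> nat).
Hypothesis HT : computes_fun X t T.

(* The search runs over inputs [<<<k, L>, <j, m>>, <B, <r, P>>>], which encode a candidate
   path of length [r] through the positions [lnth i (S <k, P>)] of the tuple coded by [L]
   from [k] to [j], each step of which is certified for all [a < m] by some [b < B]. *)
Definition in_list (I : nat) : nat := psnd (pfst (pfst I)).
Definition in_target (I : nat) : nat := pfst (psnd (pfst I)).
Definition in_stage (I : nat) : nat := psnd (psnd (pfst I)).
Definition in_bound (I : nat) : nat := pfst (psnd I).
Definition in_length (I : nat) : nat := pfst (psnd (psnd I)).
Definition in_path (I : nat) : nat := S (pair (pfst (pfst (pfst I))) (psnd (psnd (psnd I)))).

Definition cList : code := cComp cSnd (cComp cFst cFst).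
Definition cTarget : code := cComp cFst (cComp cSnd cFst).
Definition cStage : code := cComp cSnd (cComp cSnd cFst).
Definition cBound : code := cComp cFst cSnd.
Definition cLength : code := cComp cFst (cComp cSnd cSnd).
Definition cPath : code :=
  cComp cSucc (cPair (cComp cFst (cComp cFst cFst)) (cComp cSnd (cComp cSnd cSnd))).

(* [y = <<<I, i>, a>, b>] *)
Definition step_matrix (y : nat) : nat :=
  let I := pfst (pfst (pfst y)) in
  let i := psnd (pfst (pfst y)) in
  T (pair (pair (lnth (lnth i (in_path I)) (in_list I))
                (lnth (lnth (S i) (in_path I)) (in_list I)))
          (pair (psnd (pfst y)) (psnd y))).

Definition step_bounded (y : nat) : nat := bexists step_matrix (pair y (in_bound (pfst (pfst y)))).

Definition step_certified (y : nat) : nat := bforall step_bounded (pair y (in_stage (pfst y))).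

Definition path_test (I : nat) : nat :=
  test_and (test_eq (lnth (in_length I) (in_path I)) (in_target I))
           (bforall step_certified (pair I (in_length I))).

Definition cStepMatrix : code :=
  let cI := cComp cFst (cComp cFst cFst) in
  let ci := cComp cSnd (cComp cFst cFst) in
  cComp t (cPair
    (cPair (cNth (cNth ci (cComp cPath cI)) (cComp cList cI))
           (cNth (cNth (cComp cSucc ci) (cComp cPath cI)) (cComp cList cI)))
    (cPair (cComp cSnd cFst) cSnd)).

Definition cStepBounded : code :=
  cComp (cExists cStepMatrix) (cPair cId (cComp cBound (cComp cFst cFst))).

Definition cStepCertified : code := cComp (cForall cStepBounded) (cPair cId (cComp cStage cFst)).

Definition cPathTest : code :=
  cAnd (cEq (cNth cLength cPath) cTarget) (cComp (cForall cStepCertified) (cPair cId cLength)).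

Lemma computes_fun_path_test : computes_fun X cPathTest path_test.
Proof.
  assert (computes_fun X cStepMatrix step_matrix) by prove_computes_fun.
  assert (computes_fun X cStepBounded step_bounded) by prove_computes_fun.
  assert (computes_fun X cStepCertified step_certified) by prove_computes_fun.
  prove_computes_fun.
Qed.

Definition certified_path (L m B k P r j : nat) : Prop :=
  lnth r (S (pair k P)) = j /\
  forall i, i < r -> forall a, a < m -> exists b, b < B /\
    T (pair (pair (lnth (lnth i (S (pair k P))) L) (lnth (lnth (S i) (S (pair k P))) L))
            (pair a b)) = 0.

Lemma path_test_spec k L j m B r P :
  path_test (pair (pair (pair k L) (pair j m)) (pair B (pair r P))) = 0 <->
  certified_path L m B k P r j.
Proof.
  unfold certified_path, path_test, step_certified, step_bounded, step_matrix,
    in_list, in_target, in_stage, in_bound, in_length, in_path.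
  rewrite test_and_spec, test_eq_spec; autorewrite with pairing.
  rewrite bforall_spec.
  repeat (setoid_rewrite pfst_pair || setoid_rewrite psnd_pair).
  setoid_rewrite bforall_spec.
  setoid_rewrite bexists_spec.
  repeat (setoid_rewrite pfst_pair || setoid_rewrite psnd_pair).
  reflexivity.
Qed.

Definition cReach : code := cMu cPathTest.
Definition cReachFrom (w : nat) : code := cComp cReach (cPair (cConst w) cId).

Lemma halts_reach_from k L j m : halts X (cReachFrom (pair k L)) (pair j m) <->
  exists B r P, certified_path L m B k P r j.
Proof.
  unfold cReachFrom; rewrite (halts_comp X cReach _ (fun x => pair (pair k L) x))
    by prove_computes_fun.
  unfold cReach; rewrite (halts_mu X cPathTest path_test) by apply computes_fun_path_test.
  split.
  - intros [W HW]; rewrite <- (pair_pfst_psnd W), <- (pair_pfst_psnd (psnd W)) in HW.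
    rewrite path_test_spec in HW; eauto.
  - intros (B & r & P & H); exists (pair B (pair r P)); rewrite path_test_spec; exact H.
Qed.

End ReachProgram.

Lemma rt1n_iff_path (E : nat -> nat -> Prop) k j :
  clos_refl_trans_1n nat E k j <->
  exists r (v : nat -> nat), v 0 = k /\ v r = j /\ forall i, i < r -> E (v i) (v (S i)).
Proof.
  split.
  - induction 1 as [k | k l j Ekl _ (r & v & Hv0 & Hvr & Hv)].
    + exists 0, (fun _ => k); repeat split; intros; lia.
    + exists (S r), (fun i => match i with 0 => k | S i => v i end); repeat split; auto.
      intros [|i] Hi; [rewrite Hv0; exact Ekl | apply Hv; lia].
  - intros (r & v & Hv0 & Hvr & Hv); subst k j.
    enough (H : forall n, n <= r -> clos_refl_trans_1n nat E (v (r - n)) (v r))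
      by (replace 0 with (r - r) by lia; apply H; lia).
    induction n as [|n IH]; intro Hn; [rewrite Nat.sub_0_r; constructor|].
    apply Relation_Operators.rt1n_trans with (v (r - n)); [|apply IH; lia].
    replace (r - n) with (S (r - S n)) by lia; apply Hv; lia.
Qed.

Lemma uniform_witness_bound (P : nat -> nat -> Prop) m :
  (forall a, a < m -> exists b, P a b) -> exists B, forall a, a < m -> exists b, b < B /\ P a b.
Proof.
  induction m as [|m IH]; intro H; [exists 0; intros; lia|].
  destruct IH as [B HB]; [intros; apply H; lia|].
  destruct (H m ltac:(lia)) as [b0 Hb0]; exists (B + S b0); intros a Ha.
  destruct (Nat.eq_dec a m) as [->|].
  - exists b0; split; [lia | exact Hb0].
  - destruct (HB a ltac:(lia)) as [b [? ?]]; exists b; split; [lia | assumption].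
Qed.

Lemma uniform_witness_bound2 (P : nat -> nat -> nat -> Prop) r m :
  (forall i, i < r -> forall a, a < m -> exists b, P i a b) ->
  exists B, forall i, i < r -> forall a, a < m -> exists b, b < B /\ P i a b.
Proof.
  intro H.
  destruct (uniform_witness_bound (fun i B => forall a, a < m -> exists b, b < B /\ P i a b) r)
    as [B HB].
  { intros i Hi; apply uniform_witness_bound; auto. }
  exists B; intros i Hi a Ha; destruct (HB i Hi) as [Bi [HBi HPi]].
  destruct (HPi a Ha) as [b [? ?]]; exists b; split; [lia | assumption].
Qed.

Definition approx (T : nat -> nat) (m u v : nat) : Prop :=
  forall a, a < m -> exists b, T (pair (pair u v) (pair a b)) = 0.

Lemma halts_reach_from_iff X t T k L j m : computes_fun X t T ->
  halts X (cReachFrom t (pair k L)) (pair j m) <->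
  clos_refl_trans_1n nat (fun p q => approx T m (lnth p L) (lnth q L)) k j.
Proof.
  intro HT; rewrite (halts_reach_from X t T HT), rt1n_iff_path; unfold certified_path; split.
  - intros (B & r & P & Hj & Hsteps).
    exists r, (fun i => lnth i (S (pair k P))); split; [apply lnth_cons_0|]; split; [exact Hj|].
    intros i Hi a Ha; destruct (Hsteps i Hi a Ha) as [b [_ Hb]]; eauto.
  - intros (r & v & Hv0 & Hvr & Hv).
    set (P := lcode (map v (seq 1 r))).
    assert (HP : forall i, i <= r -> lnth i (S (pair k P)) = v i).
    { intros i Hi; change (S (pair k P)) with (lcode (k :: map v (seq 1 r))).
      rewrite lnth_lcode; destruct i as [|i]; [auto|cbn].
      rewrite nth_indep with (d' := v 0) by (rewrite length_map, length_seq; lia).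
      rewrite map_nth, seq_nth by lia; reflexivity. }
    destruct (uniform_witness_bound2 (fun i a b =>
        T (pair (pair (lnth (lnth i (S (pair k P))) L) (lnth (lnth (S i) (S (pair k P))) L))
              (pair a b)) = 0) r m) as [B HB].
    { intros i Hi a Ha; rewrite !HP by lia; apply Hv; auto. }
    exists B, r, P; split; [rewrite HP; auto | exact HB].
Qed.

(** * Computing the indices without the oracle *)

Fixpoint cEnc (c : code) : code :=
  match c with
  | cZero => cPair (cConst 0) (cConst 0)
  | cSucc => cPair (cConst 1) (cConst 0)
  | cId => cPair (cConst 2) (cConst 0)
  | cFst => cPair (cConst 3) (cConst 0)
  | cSnd => cPair (cConst 4) (cConst 0)
  | cOracle => cPair (cConst 5) (cConst 0)
  | cComp f g => cPair (cConst 6) (cPair (cEnc f) (cEnc g))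
  | cPair f g => cPair (cConst 7) (cPair (cEnc f) (cEnc g))
  | cRec f g => cPair (cConst 8) (cPair (cEnc f) (cEnc g))
  | cMu f => cPair (cConst 9) (cEnc f)
  end.

Lemma computes_fun_enc X c : computes_fun X (cEnc c) (fun _ => enc c).
Proof. induction c; cbn [cEnc enc]; prove_computes_fun. Qed.

Definition reach_index (t : code) (w : nat) : nat := enc (cReachFrom t w).

Lemma enc_const n : enc (cConst n) = Nat.iter n (fun v => pair 6 (pair (enc cSucc) v)) (enc cZero).
Proof. induction n as [|n IH]; cbn; [reflexivity | rewrite IH; reflexivity]. Qed.

Definition cReachIndex (t : code) : code :=
  cPair (cConst 6) (cPair (cEnc (cReach t)) (cPair (cConst 7)
    (cPair (cLoop (cPair (cConst 6) (cPair (cEnc cSucc) cId)) (cEnc cZero) cId) (cEnc cId)))).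

Lemma computes_fun_reach_index X t : computes_fun X (cReachIndex t) (reach_index t).
Proof.
  pose proof (computes_fun_enc X (cReach t)); pose proof (computes_fun_enc X cSucc);
    pose proof (computes_fun_enc X cZero); pose proof (computes_fun_enc X cId).
  eapply computes_fun_ext; [prove_computes_fun|].
  intro w; unfold reach_index, cReachFrom; cbn [enc]; rewrite enc_const; reflexivity.
Qed.

(* State [<L, <l, <k, acc>>>]: pop the list [l], pushing the index of [<k, L>] onto [acc]. *)
Definition index_step (t : code) (s : nat) : nat :=
  match pfst (psnd s) with
  | 0 => s
  | S _ => pair (pfst s) (pair (psnd (pred (pfst (psnd s))))
             (pair (S (pfst (psnd (psnd s))))
                   (S (pair (reach_index t (pair (pfst (psnd (psnd s))) (pfst s)))
                            (psnd (psnd (psnd s)))))))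
  end.

(* State [<l, acc>]: move the head of [l] onto [acc]. *)
Definition rev_step (s : nat) : nat :=
  match pfst s with
  | 0 => s
  | S _ => pair (psnd (pred (pfst s))) (S (pair (pfst (pred (pfst s))) (psnd s)))
  end.

Definition reduction_code (t : code) (l : nat) : nat :=
  let r := psnd (psnd (psnd (Nat.iter l (index_step t) (pair l (pair l (pair 0 0)))))) in
  psnd (Nat.iter r rev_step (pair r 0)).

Definition cIndexStep (t : code) : code :=
  cIfz (cComp cFst cSnd) cId
    (cPair cFst (cPair (cComp cSnd (cComp cPred (cComp cFst cSnd)))
       (cPair (cComp cSucc (cComp cFst (cComp cSnd cSnd)))
          (cComp cSucc
             (cPair (cComp (cReachIndex t) (cPair (cComp cFst (cComp cSnd cSnd)) cFst))
                    (cComp cSnd (cComp cSnd cSnd))))))).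

Definition cRevStep : code :=
  cIfz cFst cId (cPair (cComp cSnd (cComp cPred cFst))
                       (cComp cSucc (cPair (cComp cFst (cComp cPred cFst)) cSnd))).

Definition cReduction (t : code) : code :=
  cComp (cComp cSnd (cLoop cRevStep (cPair cId cZero) cId))
    (cComp (cComp cSnd (cComp cSnd cSnd))
       (cLoop (cIndexStep t) (cPair cId (cPair cId (cPair cZero cZero))) cId)).

Lemma computes_fun_reduction_code X t : computes_fun X (cReduction t) (reduction_code t).
Proof.
  pose proof (computes_fun_reach_index X t).
  assert (computes_fun X (cIndexStep t) (index_step t)) by prove_computes_fun.
  assert (computes_fun X cRevStep rev_step) by prove_computes_fun.
  prove_computes_fun.
Qed.

Definition reduction (t : code) (xs : list nat) : list nat :=
  map (fun k => reach_index t (pair k (lcode xs))) (seq 0 (length xs)).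

Lemma length_le_lcode l : length l <= lcode l.
Proof. induction l as [|x l IH]; cbn; [lia|]; pose proof (add_le_pair x (lcode l)); lia. Qed.

Lemma iter_fixpoint (g : nat -> nat) s n : g s = s -> Nat.iter n g s = s.
Proof. intro H; induction n as [|n IH]; simpl; congruence. Qed.

Lemma index_loop t L l : forall k acc,
  Nat.iter (length l) (index_step t) (pair L (pair (lcode l) (pair k (lcode acc)))) =
  pair L (pair 0 (pair (k + length l)
    (lcode (rev (map (fun i => reach_index t (pair i L)) (seq k (length l))) ++ acc)))).
Proof.
  induction l as [|x l IH]; intros k acc; [cbn; rewrite Nat.add_0_r; reflexivity|].
  cbn [length]; rewrite Nat.iter_succ_r; unfold index_step at 2;
    autorewrite with pairing; cbn [lcode Nat.pred]; autorewrite with pairing.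
  change (S (pair (reach_index t (pair k L)) (lcode acc)))
    with (lcode (reach_index t (pair k L) :: acc)).
  rewrite IH; cbn [seq map rev]; rewrite <- app_assoc, Nat.add_succ_r; reflexivity.
Qed.

Lemma rev_loop l : forall acc,
  Nat.iter (length l) rev_step (pair (lcode l) (lcode acc)) = pair 0 (lcode (rev l ++ acc)).
Proof.
  induction l as [|x l IH]; intro acc; [reflexivity|].
  cbn [length]; rewrite Nat.iter_succ_r; unfold rev_step at 2;
    autorewrite with pairing; cbn [lcode Nat.pred]; autorewrite with pairing.
  change (S (pair x (lcode acc))) with (lcode (x :: acc)).
  rewrite IH; cbn; rewrite <- app_assoc; reflexivity.
Qed.

Lemma index_loop_saturated t L xs n : length xs <= n ->
  Nat.iter n (index_step t) (pair L (pair (lcode xs) (pair 0 0))) =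
  pair L (pair 0 (pair (length xs)
    (lcode (rev (map (fun i => reach_index t (pair i L)) (seq 0 (length xs))))))).
Proof.
  intro H; replace n with ((n - length xs) + length xs) by lia.
  rewrite Nat.iter_add; change (pair 0 0) with (pair 0 (lcode [])); rewrite index_loop.
  rewrite iter_fixpoint by (unfold index_step; autorewrite with pairing; reflexivity).
  rewrite app_nil_r; reflexivity.
Qed.

Lemma rev_loop_saturated l n : length l <= n ->
  Nat.iter n rev_step (pair (lcode l) 0) = pair 0 (lcode (rev l)).
Proof.
  intro H; replace n with ((n - length l) + length l) by lia.
  rewrite Nat.iter_add; change (pair (lcode l) 0) with (pair (lcode l) (lcode [])).
  rewrite rev_loop, iter_fixpoint by (unfold rev_step; autorewrite with pairing; reflexivity).
  rewrite app_nil_r; reflexivity.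
Qed.

Lemma reduction_code_lcode t xs : reduction_code t (lcode xs) = lcode (reduction t xs).
Proof.
  unfold reduction_code; cbv zeta.
  rewrite index_loop_saturated by apply length_le_lcode; autorewrite with pairing.
  rewrite rev_loop_saturated by apply length_le_lcode; autorewrite with pairing.
  rewrite rev_involutive; reflexivity.
Qed.

Lemma reduction_computable t :
  exists e, forall xs, phi no_oracle e (lcode xs) (lcode (reduction t xs)).
Proof.
  exists (enc (cReduction t)); intro xs; unfold phi; rewrite decode_enc, <- reduction_code_lcode.
  apply computes_fun_reduction_code.
Qed.

Lemma length_reduction t xs : length (reduction t xs) = length xs.
Proof. unfold reduction; rewrite length_map, length_seq; reflexivity. Qed.

Lemma nth_reduction t xs i : i < length xs ->
  nth i (reduction t xs) 0 = reach_index t (pair i (lcode xs)).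
Proof.
  intro Hi; unfold reduction.
  rewrite nth_indep with (d' := reach_index t (pair 0 (lcode xs)))
    by (rewrite length_map, length_seq; lia).
  rewrite (map_nth (fun k => reach_index t (pair k (lcode xs)))), seq_nth by lia; reflexivity.
Qed.

(** * Reachability classes determine the equivalence *)

Section ReachabilityClasses.
Variables (R : nat -> nat -> Prop) (E : nat -> nat -> nat -> Prop) (lab : nat -> nat)
  (labels : list nat).
Hypothesis R_equiv : is_equiv R.
Hypothesis R_iff_E : forall u v, R u v <-> forall m, E m u v.
Hypothesis E_antitone : forall m m' u v, m <= m' -> E m' u v -> E m u v.
Hypothesis lab_in : forall p, In (lab p) labels.

Lemma stage_excludes_non_R (pairs : list (nat * nat)) :
  exists M, forall u v, In (u, v) pairs -> E M u v -> R u v.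
Proof.
  induction pairs as [|[u v] pairs [M HM]]; [exists 0; intros ? ? []|].
  destruct (classic (R u v)) as [Huv | Huv].
  - exists M; intros u' v' [[= <- <-] | Hin] HE; auto.
  - rewrite R_iff_E in Huv; apply not_all_ex_not in Huv as [m0 Hm0].
    exists (M + m0); intros u' v' [[= <- <-] | Hin] HE.
    + exfalso; apply Hm0, (E_antitone m0 (M + m0)); [lia | exact HE].
    + apply HM; [exact Hin | apply (E_antitone M (M + m0)); [lia | exact HE]].
Qed.

Lemma R_iff_same_reach k l :
  R (lab k) (lab l) <->
  forall m j, clos_refl_trans_1n nat (fun p q => E m (lab p) (lab q)) k j <->
              clos_refl_trans_1n nat (fun p q => E m (lab p) (lab q)) l j.
Proof.
  destruct R_equiv as (Hrefl & Hsym & Htrans); split.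
  - intros Hkl m j; split; intro Hreach.
    + apply Relation_Operators.rt1n_trans with k; [apply R_iff_E, Hsym, Hkl | exact Hreach].
    + apply Relation_Operators.rt1n_trans with l; [apply R_iff_E, Hkl | exact Hreach].
  - intro Hsame.
    destruct (stage_excludes_non_R (list_prod labels labels)) as [M HM].
    assert (Hpath : forall p q, clos_refl_trans_1n nat (fun p q => E M (lab p) (lab q)) p q ->
                                R (lab p) (lab q)).
    { induction 1 as [p | p q r Hpq _ IH]; [apply Hrefl|].
      apply Htrans with (lab q); [apply HM; [apply in_prod | ]; auto | exact IH]. }
    apply Hsym, Hpath, Hsame; constructor.
Qed.

End ReachabilityClasses.

Lemma approx_antitone T m m' u v : m <= m' -> approx T m' u v -> approx T m u v.
Proof. intros Hm H a Ha; apply H; lia. Qed.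

Lemma forall_approx_iff T u v :
  (forall m, approx T m u v) <-> forall a, exists b, T (pair (pair u v) (pair a b)) = 0.
Proof.
  split; intros H a.
  - apply (H (S a)); lia.
  - intros b _; apply H.
Qed.

Lemma lnth_lcode_in xs p : In (lnth p (lcode xs)) (0 :: xs).
Proof.
  rewrite lnth_lcode; destruct (le_lt_dec (length xs) p).
  - rewrite nth_overflow by assumption; left; reflexivity.
  - right; apply nth_In; assumption.
Qed.

Lemma EW_reach_index X t T L k l : computes_fun X t T ->
  EW X (reach_index t (pair k L)) (reach_index t (pair l L)) <->
  forall m j, clos_refl_trans_1n nat (fun p q => approx T m (lnth p L) (lnth q L)) k j <->
              clos_refl_trans_1n nat (fun p q => approx T m (lnth p L) (lnth q L)) l j.
Proof.
  intro HT; unfold EW, W, reach_index; rewrite !decode_enc; split.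
  - intros H m j; rewrite <- !(halts_reach_from_iff X t T) by exact HT; apply H.
  - intros H n; rewrite <- (pair_pfst_psnd n), !(halts_reach_from_iff X t T) by exact HT.
    apply H.
Qed.

Lemma total_computes_fun X c :
  (forall x, exists y, computes X c x y) -> exists F, computes_fun X c F.
Proof.
  intro Htot; exists (fun x => proj1_sig (constructive_indefinite_description _ (Htot x))).
  intro x; exact (proj2_sig (constructive_indefinite_description _ (Htot x))).
Qed.

Lemma computes_iff_fun X c F x y : computes_fun X c F -> (computes X c x y <-> F x = y).
Proof.
  intro HF; split; [intro H; exact (computes_functional X c x _ _ (HF x) H) | intros <-; apply HF].
Qed.

Theorem corollary3p5 (X : nat -> bool) (R : nat -> nat -> Prop) :
  is_equiv R -> Pi02_rel X R -> finitary_reducible R (EW X).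
Proof.
  intros Heq [e [Htot HR]].
  destruct (total_computes_fun X (decode e) Htot) as [T HT].
  assert (HRT : forall u v, R u v <-> forall m, approx T m u v).
  { intros u v; rewrite forall_approx_iff, HR; unfold phi.
    setoid_rewrite (computes_iff_fun X (decode e) T _ 0 HT); reflexivity. }
  exists (reduction (decode e)); split; [apply reduction_computable|].
  intros xs _; split; [apply length_reduction|]; intros i j Hij.
  rewrite !nth_reduction, <- !lnth_lcode, (EW_reach_index X _ T) by (assumption || lia).
  apply (R_iff_same_reach R (approx T) (fun p => lnth p (lcode xs)) (0 :: xs) Heq HRT
           (approx_antitone T) (lnth_lcode_in xs)).
Qed.
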